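(* Let $x\in\Gamma_0$ be such that for all $i,j,k,l$ in the same connected component of $G_x$ with $x_{ij}>0$ and $x_{kl}>0$ one has $a_{ij}p_{ij}=a_{kl}p_{kl}$. If property $P_{G_x}$ does not hold, then $G_x$ has at least one connected component in which every vertex belongs to at least two edges of $G_x$.
   Context: Let $G=(\mathbb{V},E)$ be a finite graph with adjacency $\sim$. Let $a_{ij}=a_{ji}\ge0$ ($>0$ only if $i\sim j$) and $p_{ij}=p_{ji}\in[0,1]$ ($=0$ if $i\not\sim j$), with some $a_{ij}p_{ij}>0$. Fix $h_1\in(0,1]$; $\Delta$ is the set of arrays $x=(x_{ij})$ with $x_{ij}=x_{ji}\ge0$, $x_{ij}=0$ if $i\not\sim j$, $\sum_{i,j}x_{ij}=1$, $\sum_{(i,j):a_{ij}p_{ij}>0}x_{ij}\ge h_1$; $x_i=\sum_jx_{ij}$. $\partial\Delta$: the $x\in\Delta$ for which some vertex $i$ having a neighbour $j$ with $a_{ij}p_{ij}>0$ has $\sum_{j:a_{ij}p_{ij}>0}x_{ij}=0$. $H(x)=\sum_{(i,j):x_{ij}>0}a_{ij}p_{ij}x_{ij}^2/(x_ix_j)$; $F(x)_{ij}=x_{ij}\big(a_{ij}p_{ij}\frac{x_{ij}}{x_ix_j}-H(x)\big)$ ($F_{ij}=0$ if $x_{ij}=0$; the fraction is $0$ if $a_{ij}p_{ij}=0$); $\Gamma=\{x\in\Delta:F(x)=0\}$, $\Gamma_0=\Gamma\cap(\Delta\setminus\partial\Delta)$. $G_x$: subgraph with vertex set $\mathbb{V}$,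 $i,j$ adjacent iff $x_{ij}>0$. For a subgraph $\mathcal{G}$ of $G$ (vertex set $\mathbb{V}$), property $P_{\mathcal{G}}$ means: (1) all edges $\{i,j\}$ of $\mathcal{G}$ lying in a same connected component have the same value $a_{ij}p_{ij}$, and it is $>0$; (2) each connected component contains at most one vertex with several neighbours; (3) a vertex $i$ lies on an edge of $\mathcal{G}$ iff $a_{ij}p_{ij}>0$ for some $j\sim i$. *)

From HB Require Import structures.
From mathcomp Require Import all_boot all_order all_algebra.
Set Implicit Arguments. Unset Strict Implicit. Unset Printing Implicit Defensive.
Import Order.TTheory GRing.Theory Num.Theory.
Local Open Scope ring_scope.

Section Defs.
Variables (R : realFieldType) (T : finType).

Definition ap (a p : T -> T -> R) (i j : T) : R := a i j * p i j.

Definition xv (x : T -> T -> R) (i : T) : R := \sum_(j : T) x i j.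

Definition inDelta (adj : rel T) (a p : T -> T -> R) (h1 : R) (x : T -> T -> R) : Prop :=
  [/\ (forall i j, x i j = x j i),
      (forall i j, 0 <= x i j),
      (forall i j, ~~ adj i j -> x i j = 0),
      \sum_(i : T) \sum_(j : T) x i j = 1
    & h1 <= \sum_(i : T) \sum_(j : T | 0 < ap a p i j) x i j].

Definition inBoundary (adj : rel T) (a p : T -> T -> R) (h1 : R) (x : T -> T -> R) : Prop :=
  inDelta adj a p h1 x /\
  exists i, (exists j, adj i j /\ 0 < ap a p i j) /\
            \sum_(j : T | 0 < ap a p i j) x i j = 0.

Definition Hfun (a p : T -> T -> R) (x : T -> T -> R) : R :=
  \sum_(i : T) \sum_(j : T | 0 < x i j)
     ap a p i j * x i j ^+ 2 / (xv x i * xv x j).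

Definition Ffun (a p : T -> T -> R) (x : T -> T -> R) (i j : T) : R :=
  if x i j == 0 then 0
  else x i j * (ap a p i j * x i j / (xv x i * xv x j) - Hfun a p x).

Definition inGamma adj a p h1 x : Prop :=
  inDelta adj a p h1 x /\ forall i j, Ffun a p x i j = 0.

Definition inGamma0 adj a p h1 x : Prop :=
  inGamma adj a p h1 x /\ ~ inBoundary adj a p h1 x.

Definition Gx (x : T -> T -> R) : rel T := fun i j => 0 < x i j.

Definition deg (Gr : rel T) (i : T) : nat := #|[pred j | Gr i j]|.

Definition propP (adj : rel T) (a p : T -> T -> R) (Gr : rel T) : Prop :=
  [/\ (forall i j k l, Gr i j -> Gr k l -> connect Gr i k ->
          ap a p i j = ap a p k l /\ 0 < ap a p i j),
      (forall i k, connect Gr i k -> (1 < deg Gr i)%N -> (1 < deg Gr k)%N -> i = k)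
    & (forall i, (exists j, Gr i j) <-> (exists j, adj i j /\ 0 < ap a p i j))].

End Defs.

From HB Require Import structures.
From mathcomp Require Import all_boot all_order all_algebra.
From mathcomp Require Import lra.
Set Implicit Arguments. Unset Strict Implicit.
Import Order.TTheory GRing.Theory Num.Theory.
Local Open Scope ring_scope.

(* At a stationary point every edge ij of G_x satisfies a_ij p_ij x_ij = H x_i x_j.
   If all edges at a vertex k share the value c, summing over them gives
   c = H * (sum of x_l over the neighbours l of k).  For a leaf m hanging at j this
   reads c = H x_j; a neighbour k of j with a second neighbour l would then give
   c >= H (x_j + x_l) > c.  Hence the component of a leaf is a star, with at most
   one vertex of degree >= 2, and failure of P_{G_x} forces a component without
   vertices of degree <= 1; the other clauses of P_{G_x} come from H > 0 and
   from x lying off the boundary. *)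

Section StationaryPoint.
Variables (R : realFieldType) (T : finType) (a p x : T -> T -> R).
Hypotheses (x_sym : forall i j, x i j = x j i) (x_ge0 : forall i j, 0 <= x i j).
Hypothesis stationary : forall i j, Ffun a p x i j = 0.

Local Notation G := (Gx x).
Local Notation H := (Hfun a p x).

Lemma Gx_sym : symmetric G.
Proof. by move=> i j; rewrite /Gx x_sym. Qed.

Lemma x_eq0_notGx i j : ~~ G i j -> x i j = 0.
Proof. by rewrite /Gx -leNgt => x_le0; apply/eqP; rewrite eq_le x_le0 x_ge0. Qed.

Lemma xv_ge0 i : 0 <= xv x i.
Proof. exact: sumr_ge0. Qed.

Lemma xv_gt0 i j : G i j -> 0 < xv x i.
Proof.
move=> Gij; apply: lt_le_trans Gij _.
by rewrite /xv (bigD1 j) //= lerDl sumr_ge0.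
Qed.

Lemma xv_Gx i : xv x i = \sum_(j | G i j) x i j.
Proof. by rewrite /xv (bigID (G i)) /= [X in _ + X]big1 ?addr0 // => j /x_eq0_notGx. Qed.

Lemma stationary_edge i j : G i j -> ap a p i j * x i j = H * (xv x i * xv x j).
Proof.
move=> Gij; have := stationary i j; rewrite /Ffun gt_eqF //=.
move/eqP; rewrite mulf_eq0 gt_eqF //= subr_eq0 => /eqP <-.
rewrite divfK // mulf_neq0 // gt_eqF //; first exact: xv_gt0 Gij.
by apply: (@xv_gt0 _ i); rewrite Gx_sym.
Qed.

Lemma Hfun_gt0 adj h1 : inDelta adj a p h1 x -> 0 < h1 -> 0 < H.
Proof.
case=> _ _ _ _ h1_le h1_gt0.
have /existsP[i /existsP[j /andP[ap_gt0 Gij]]] :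
    [exists i, exists j, (0 < ap a p i j) && G i j].
  apply: contraTT (lt_le_trans h1_gt0 h1_le) => /existsPn none.
  rewrite big1 ?ltxx // => i _; apply: big1 => j ap_gt0.
  by apply: x_eq0_notGx; move/existsPn: (none i) => /(_ j); rewrite ap_gt0.
have := mulr_gt0 ap_gt0 Gij; rewrite stationary_edge // pmulr_lgt0 //.
by rewrite mulr_gt0 //; [apply: xv_gt0 Gij | apply: (@xv_gt0 _ i); rewrite Gx_sym].
Qed.

Hypothesis H_gt0 : 0 < H.

Lemma ap_gt0_Gx i j : G i j -> 0 < ap a p i j.
Proof.
move=> Gij; have Gji : G j i by rewrite Gx_sym.
have := mulr_gt0 H_gt0 (mulr_gt0 (xv_gt0 Gij) (xv_gt0 Gji)).
by rewrite -stationary_edge // pmulr_lgt0.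
Qed.

Lemma ap_star_value k j c : G k j -> (forall l, G k l -> ap a p k l = c) ->
  c = H * \sum_(l | G k l) xv x l.
Proof.
move=> Gkj ap_c; apply: (mulIf (lt0r_neq0 (xv_gt0 Gkj))).
rewrite {1}xv_Gx -mulrA [(\sum_(l | G k l) _) * _]mulr_suml !mulr_sumr.
by apply: eq_bigr => l Gkl; rewrite -(ap_c l Gkl) stationary_edge // (mulrC (xv x l)).
Qed.

Hypothesis ap_const : forall i j k l, connect G i k -> G i j -> G k l ->
  ap a p i j = ap a p k l.

Lemma leaf_hub_star m j : G m j -> (forall l, G m l -> l = j) ->
  forall k l, G j k -> G k l -> l = j.
Proof.
move=> Gmj leaf_m k l Gjk Gkl; apply/eqP/negP => /negP l_neq_j.
have m_conn_k : connect G m k := connect_trans (connect1 Gmj) (connect1 Gjk).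
have c_m : ap a p m j = H * xv x j.
  rewrite (ap_star_value Gmj (fun l Gml => congr1 _ (leaf_m l Gml))).
  by rewrite (big_pred1 j) // => u; apply/idP/eqP => [/leaf_m | ->].
have c_k := ap_star_value Gkl (fun l' Gkl' => esym (ap_const m_conn_k Gmj Gkl')).
have sum_ge : xv x j + xv x l <= \sum_(l' | G k l') xv x l'.
  have Gkj : G k j by rewrite Gx_sym.
  rewrite (bigD1 j) // (bigD1 l) /= ?Gkl ?l_neq_j //.
  by rewrite addrA lerDl sumr_ge0 // => i _; apply: xv_ge0.
have Glk : G l k by rewrite Gx_sym.
have := ler_wpM2l (ltW H_gt0) sum_ge; rewrite -c_k c_m mulrDr.
have := mulr_gt0 H_gt0 (xv_gt0 Glk).
lra.
Qed.

Lemma leaf_component_deg m w v : G m w -> (forall l, G m l -> l = w) ->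
  connect G m v -> v = w \/ (deg G v <= 1)%N.
Proof.
move=> Gmw leaf_m m_conn_v.
have star := leaf_hub_star Gmw leaf_m.
pose P := [pred u | (u == w) || G w u].
have P_fwd u u' : u \in P -> G u u' -> u' \in P.
  by rewrite !inE => /orP[/eqP -> Gwu' | /star hub /hub ->]; rewrite ?Gwu' ?eqxx ?orbT.
have P_closed : closed G P.
  by move=> u u' Guu'; apply/idP/idP => /P_fwd; apply; rewrite // Gx_sym.
have : v \in P by rewrite -(closed_connect P_closed m_conn_v) inE Gx_sym Gmw orbT.
rewrite inE => /orP[/eqP -> | Gwv]; [by left | right].
by apply/card_le1_eqP => u u'; rewrite !inE => /(star _ _ Gwv) -> /(star _ _ Gwv) ->.
Qed.

Lemma leaf_component_hub m i k : (deg G m <= 1)%N ->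
  connect G m i -> connect G m k -> (1 < deg G i)%N -> (1 < deg G k)%N -> i = k.
Proof.
move=> deg_m m_conn_i m_conn_k deg_i deg_k.
case/connectP: (m_conn_i) => [[|w s] /=] => [_ eq_im | /andP[Gmw _] _].
  by rewrite eq_im ltnNge deg_m in deg_i.
have leaf_m l : G m l -> l = w by move=> Gml; apply: (card_le1_eqP deg_m); rewrite inE.
case: (leaf_component_deg Gmw leaf_m m_conn_i) => [-> | ]; last by rewrite leqNgt deg_i.
by case: (leaf_component_deg Gmw leaf_m m_conn_k) => [-> | ]; last by rewrite leqNgt deg_k.
Qed.

End StationaryPoint.

Theorem lemma11 (R : realFieldType) (T : finType) (adj : rel T)
  (a p : T -> T -> R) (h1 : R) (x : T -> T -> R) :
  (forall i j, adj i j = adj j i) ->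
  (forall i, ~~ adj i i) ->
  (forall i j, a i j = a j i) ->
  (forall i j, 0 <= a i j) ->
  (forall i j, 0 < a i j -> adj i j) ->
  (forall i j, p i j = p j i) ->
  (forall i j, 0 <= p i j <= 1) ->
  (forall i j, ~~ adj i j -> p i j = 0) ->
  (exists i j, 0 < ap a p i j) ->
  0 < h1 <= 1 ->
  inGamma0 adj a p h1 x ->
  (forall i j k l, connect (Gx x) i k -> 0 < x i j -> 0 < x k l ->
      ap a p i j = ap a p k l) ->
  ~ propP adj a p (Gx x) ->
  exists i, forall k, connect (Gx x) i k -> (1 < deg (Gx x) k)%N.
Proof.
move=> _ _ _ _ _ _ _ _ _ /andP[h1_gt0 _] [[x_Delta stationary] off_boundary] ap_const notP.
have x_Delta' := x_Delta; case: x_Delta' => x_sym x_ge0 x_adj _ _.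
have H_gt0 := Hfun_gt0 x_sym x_ge0 stationary x_Delta h1_gt0.
have ap_gt0 := ap_gt0_Gx x_sym x_ge0 stationary H_gt0.
have [/existsP[i core] | ] :=
    boolP [exists i, [forall k, connect (Gx x) i k ==> (1 < deg (Gx x) k)%N]].
  by exists i => k; apply/implyP; move/forallP: core.
rewrite negb_exists => /forallP no_core; exfalso; apply: notP; split.
- move=> i j k l Gij Gkl i_conn_k.
  by split; [apply: ap_const | apply: ap_gt0 Gij].
- move=> i k i_conn_k deg_i deg_k.
  move: (no_core i); rewrite negb_forall => /existsP[m].
  rewrite negb_imply -leqNgt => /andP[i_conn_m deg_m].
  have m_conn_i : connect (Gx x) m i by rewrite (sym_connect_sym (Gx_sym x_sym)).
  apply: (leaf_component_hub x_sym x_ge0 stationary H_gt0 ap_const deg_m) => //.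
  exact: connect_trans m_conn_i i_conn_k.
- move=> i; split=> [[j Gij] | [j adj_ap_ij]].
    exists j; split; last exact: ap_gt0 Gij.
    by apply: contraTT Gij => /x_adj; rewrite /Gx => ->; rewrite ltxx.
  have [/existsP // | ] := boolP [exists j, Gx x i j].
  rewrite negb_exists => /forallP isolated.
  exfalso; apply: off_boundary; split=> //; exists i; split; first by exists j.
  by apply: big1 => l _; exact: x_eq0_notGx x_ge0 _ _ (isolated l).
Qed.
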